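(* For every prime $p$ and every integer $k>1$, $cw(\mathrm{Syl}_p(S_{p^k}))=1$. For every prime $p>2$ and every integer $k>1$, $cw(\mathrm{Syl}_p(A_{p^k}))=1$.
   Context: $\mathrm{Syl}_p(G)$ denotes a Sylow $p$-subgroup of $G$; $S_n$, $A_n$ are the symmetric and alternating groups. The commutator width $cw(G)$ is the least $n$ such that every element of $G'$ is a product of at most $n$ commutators. *)

From mathcomp Require Import all_boot all_fingroup all_solvable.
Set Implicit Arguments. Unset Strict Implicit. Unset Printing Implicit Defensive.
Local Open Scope group_scope.

Definition prod_comm_le (gT : finGroupType) (G : {set gT}) (n : nat) (x : gT) : Prop :=
  exists s : seq (gT * gT),
    [/\ (size s <= n)%N,
        all (fun ab => (ab.1 \in G) && (ab.2 \in G)) s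
      & x = \prod_(ab <- s) [~ ab.1, ab.2]].

Definition cw_bound (gT : finGroupType) (G : {set gT}) (n : nat) : Prop :=
  forall x, x \in G^`(1) -> prod_comm_le G n x.

Definition commutator_width (gT : finGroupType) (G : {set gT}) (n : nat) : Prop :=
  cw_bound G n /\ forall m, cw_bound G m -> (n <= m)%N.

From mathcomp Require Import all_boot all_fingroup all_solvable ssralg zmodp.
Set Implicit Arguments. Unset Strict Implicit. Unset Printing Implicit Defensive.
Import GRing.Theory.

(* A Sylow p-subgroup of S_(p^k) is the k-fold iterated wreath product of C_p,
   and for odd p a Sylow p-subgroup of A_(p^k) is also one of S_(p^k), the
   index being 2.  In W = H wr C_p the derived subgroup lies among the base
   elements (c_r)_r whose product lies in H'.  If that product is a single
   commutator [u, v] of H, then (c_r)_r is the commutator of the base element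
   (u c_0 ... c_(r-1))_r with the cyclic shift carrying v in one coordinate.
   Hence "every element of G' is a commutator" passes from H to W, and W' is
   nontrivial as soon as H is, which happens from k = 2 on. *)

Lemma logn_fact_widen p n N : prime p -> n <= N ->
  logn p n`! = \sum_(1 <= k < N.+1) n %/ p ^ k.
Proof.
move=> p_pr le_nN; rewrite logn_fact // [RHS](big_cat_nat _ (n := n.+1)) ?ltnS //.
rewrite /= [X in _ + X]big1_seq ?addn0 // => k /andP[_].
rewrite mem_index_iota => /andP[lt_nk _].
apply/divn_small/(leq_trans (ltn_expl n (prime_gt1 p_pr))).
by rewrite leq_pexp2l ?prime_gt0 // ltnW.
Qed.

Lemma logn_fact_div p n : prime p -> logn p n`! = n %/ p + logn p (n %/ p)`!.
Proof.
move=> p_pr; case: n => [|n]; first by rewrite div0n.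
rewrite logn_fact // big_ltn // expn1 big_add1 (logn_fact_widen (N := n)) //.
  by congr (_ + _); apply: eq_bigr => k _; rewrite expnS divnMA.
by rewrite -ltnS ltn_Pdiv ?prime_gt1.
Qed.

Lemma logn_fact_pexp p k : prime p -> logn p (p ^ k)`! = \sum_(i < k) p ^ i.
Proof.
move=> p_pr; elim: k => [|k IHk]; first by rewrite big_ord0 logn1.
by rewrite logn_fact_div // expnS mulKn ?prime_gt0 // IHk big_ord_recr addnC.
Qed.

Local Open Scope group_scope.

Lemma cw_bound1P (gT : finGroupType) (G : {group gT}) :
  cw_bound G 1 <->
  (forall g, g \in G^`(1) -> exists u v, [/\ u \in G, v \in G & g = [~ u, v]]).
Proof.
split=> cwG g /cwG; last first.
  case=> u [v [Gu Gv ->]]; exists [:: (u, v)].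
  by rewrite big_seq1 /= Gu Gv.
case=> s [size_s Gs ->]; case: s size_s Gs => [|[u v] [|//]] _ /=.
  by rewrite big_nil; exists 1, 1; rewrite comm1g group1.
by rewrite andbT big_seq1 => /andP[Gu Gv]; exists u, v.
Qed.

Lemma commutator_width1 (gT : finGroupType) (G : {group gT}) :
  cw_bound G 1 -> G^`(1) != 1 -> commutator_width G 1.
Proof.
move=> cwG /trivgPn[g G'g ntg]; split=> // -[|//] /(_ g G'g)[s [size_s _ gE]].
by case: s size_s gE => // _ gE; rewrite gE big_nil eqxx in ntg.
Qed.

Lemma cw_bound_isog (gT rT : finGroupType) (G : {group gT}) (H : {group rT}) n :
  G \isog H -> cw_bound G n -> cw_bound H n.
Proof.
case/isogP=> f _ <- cwG y; rewrite -morphim_der // => /morphimP[g Gg G'g ->].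
have [s [size_s /allP Gs ->]] := cwG g G'g.
have{} Gs ab : ab \in s -> (ab.1 \in G) && (ab.2 \in G) := Gs ab.
exists [seq (f ab.1, f ab.2) | ab <- s]; split; first by rewrite size_map.
  by apply/allP=> _ /mapP[ab /Gs/andP[Ga Gb] ->]; rewrite /= !mem_morphim.
rewrite big_map !big_seq morph_prod => [|ab /Gs/andP[Ga Gb]]; last exact: groupR.
by apply: eq_bigr => ab /Gs/andP[Ga Gb]; rewrite morphR.
Qed.

Lemma commutator_width_isog (gT rT : finGroupType) (G : {group gT}) (H : {group rT}) n :
  G \isog H -> commutator_width G n -> commutator_width H n.
Proof.
move=> isoGH [cwG minG]; split=> [|m cwH]; first exact: cw_bound_isog cwG.
by apply: minG; apply: cw_bound_isog cwH; rewrite isog_sym.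
Qed.

Lemma der1_sub_additive_ker (gT : finGroupType) (G : {group gT}) (V : zmodType)
    (f : gT -> V) :
  {in G &, {morph f : x y / x * y >-> (x + y)%R}} ->
  G^`(1) \subset [set x in G | f x == 0%R].
Proof.
move=> fM; have f1 : f 1 = 0%R.
  by apply: (addrI (f 1)); rewrite -fM // mulg1 addr0.
have fV x : x \in G -> f x^-1 = (- f x)%R.
  by move=> Gx; apply/eqP; rewrite -addr_eq0 -fM ?groupV // mulVg f1.
have kerG : group_set [set x in G | f x == 0%R].
  apply/group_setP; split=> [|x y]; first by rewrite inE group1 f1 eqxx.
  rewrite !inE => /andP[Gx /eqP fx0] /andP[Gy /eqP fy0].
  by rewrite groupM // fM // fx0 fy0 addr0 eqxx.
rewrite (_ : [set x in G | f x == 0%R] = Group kerG) // gen_subG.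
apply/subsetP=> _ /imset2P[x y Gx Gy ->]; rewrite inE groupR //=.
by rewrite commgEl conjgE !fM ?groupM ?groupV // !fV // addrCA addKr addNr.
Qed.

Section CyclicWreath.

Variables (n : nat) (X : finType).
Local Notation p := n.+1.
Implicit Types (s t r : 'I_p) (c d : 'I_p -> {perm X}) (g h : {perm 'I_p * X}).

Definition wr_fun s c (y : 'I_p * X) := ((y.1 + s)%R, c y.1 y.2).

Fact wr_fun_inj s c : injective (wr_fun s c).
Proof.
move=> [r x] [r' x'] eq_rx; have /= /addIr rr' := congr1 fst eq_rx.
by move: eq_rx => /(congr1 snd) /=; rewrite -rr' => /perm_inj ->.
Qed.

Definition wr s c : {perm 'I_p * X} := perm (@wr_fun_inj s c).

Lemma wrE s c r x : wr s c (r, x) = ((r + s)%R, c r x).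
Proof. by rewrite permE. Qed.

Lemma eq_wr s t c d : s = t -> c =1 d -> wr s c = wr t d.
Proof. by move=> -> cd; apply/permP => -[r x]; rewrite !wrE cd. Qed.

Lemma wrM s t c d : wr s c * wr t d = wr (s + t)%R (fun r => c r * d (r + s)%R).
Proof. by apply/permP => -[r x]; rewrite permM !wrE permM addrA. Qed.

Lemma wr1 : wr 0%R (fun _ => 1) = 1.
Proof. by apply/permP => -[r x]; rewrite wrE addr0 !perm1. Qed.

Lemma wrV s c : (wr s c)^-1 = wr (- s)%R (fun r => (c (r - s)%R)^-1).
Proof.
apply/eqP; rewrite eq_invg_mul wrM -wr1; apply/eqP/eq_wr => [|r].
  exact: subrr.
by rewrite addrK mulgV.
Qed.

Lemma wr_commg0 t c d :
  [~ wr 0%R c, wr t d] = wr 0%R (fun r => (c r)^-1 * c (r - t)%R ^ d (r - t)%R).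
Proof.
rewrite commgEl conjgE !wrV !wrM; apply: eq_wr => [|r].
  by rewrite oppr0 !add0r addNr.
by rewrite !subr0 !addr0 conjgE !mulgA.
Qed.

(* [inZp 1] rather than [1]: ['I_p] is a ring only for [p > 1]. *)
Lemma wr_base_commg c u v :
    \prod_(i < p) c i = [~ u, v] ->
  wr 0%R c = [~ wr 0%R (fun r => u * \prod_(0 <= i < r) c (inord i)),
                wr (- inZp 1)%R (fun r => if r == 0%R then v else 1)].
Proof.
move=> prod_c; rewrite wr_commg0; apply: eq_wr => // r; rewrite opprK.
have {}prod_c : \prod_(0 <= i < p) c (inord i) = [~ u, v].
  by rewrite -prod_c big_mkord; apply: eq_bigr => i _; rewrite inord_val.
have val_r1 : val (r + inZp 1)%R = r.+1 %% p by rewrite /= modnDmr addn1.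
have [lt_rn | ge_rn] := ltnP r n.
  have r1E : val (r + inZp 1)%R = r.+1 by rewrite val_r1 modn_small.
  have -> : (r + inZp 1 == 0)%R = false by apply/eqP => /(congr1 val); rewrite r1E.
  by rewrite conjg1 r1E big_nat_recr //= inord_val [u * (_ * _)]mulgA mulKg.
have r_n : val r = n by apply/eqP; rewrite eqn_leq ge_rn -ltnS ltn_ord.
have -> : (r + inZp 1)%R = 0%R by apply: val_inj; rewrite val_r1 r_n modnn.
rewrite eqxx r_n [X in (_ * X) ^ v]big_geq // mulg1 invMg -mulgA -commgEl.
rewrite -prod_c big_nat_recr //= mulKg; congr c.
by apply: val_inj; rewrite /= inordK // r_n.
Qed.

Variable H : {group {perm X}}.

Definition wreath := [set wr sc.1 (sc.2 : {ffun _ -> _}) | sc in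
  setX [set: 'I_p] [set c : {ffun 'I_p -> {perm X}} | [forall r, c r \in H]]].

Lemma mem_wreath s c : (forall r, c r \in H) -> wr s c \in wreath.
Proof.
move=> Hc; apply/imsetP; exists (s, finfun c).
  by rewrite !inE; apply/forallP => r; rewrite ffunE.
by apply: eq_wr => // r; rewrite ffunE.
Qed.

Lemma wreathP g :
  reflect (exists s, exists2 c, (forall r, c r \in H) & g = wr s c) (g \in wreath).
Proof.
apply: (iffP imsetP) => [[[s c]] | [s [c Hc ->]]].
  by rewrite !inE => /forallP Hc ->; exists s, c.
by apply/imsetP; exact: mem_wreath.
Qed.

Lemma wreath_group_set : group_set wreath.
Proof.
apply/group_setP; split=> [|_ _ /wreathP[s [c Hc ->]] /wreathP[t [d Hd ->]]].
  by rewrite -wr1 mem_wreath.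
by rewrite wrM mem_wreath // => r; rewrite groupM.
Qed.

Canonical wreath_group := Group wreath_group_set.

Variable x0 : X.

Lemma wr_inj s t c d : wr s c = wr t d -> s = t /\ c =1 d.
Proof.
move=> eq_wr_st; split=> [|r].
  have := congr1 (fun g => (g (0%R, x0)).1) eq_wr_st.
  by rewrite /= !wrE /= !add0r.
apply/permP => x; have := congr1 (fun g => (g (r, x)).2) eq_wr_st.
by rewrite /= !wrE.
Qed.

Lemma card_wreath : #|wreath| = (p * #|H| ^ p)%N.
Proof.
rewrite card_in_imset => [|[s c] [t d] _ _ /wr_inj[/= -> cd]]; last first.
  by congr (_, _); apply/ffunP.
rewrite cardsX cardsT card_ord -[X in (_ ^ X)%N](card_ord p) -card_ffun_on.
by congr (_ * _)%N; apply: eq_card => c; rewrite !inE; apply/forallP/ffun_onP.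
Qed.

Definition wr_top g : 'I_p := (g (0%R, x0)).1.

Lemma wr_topE s c : wr_top (wr s c) = s.
Proof. by rewrite /wr_top wrE /= add0r. Qed.

Lemma wr_topM : {in wreath &, {morph wr_top : g h / g * h >-> (g + h)%R}}.
Proof.
by move=> _ _ /wreathP[s [c _ ->]] /wreathP[t [d _ ->]]; rewrite wrM !wr_topE.
Qed.

Definition wr_comp g r : {perm X} :=
  odflt 1 [pick h in H | [forall x, (g (r, x)).2 == h x]].

Lemma wr_compE s c r : c r \in H -> wr_comp (wr s c) r = c r.
Proof.
move=> Hcr; rewrite /wr_comp; case: pickP => [h /andP[_ /forallP ch] | /(_ (c r))].
  by apply/permP => x; have /eqP := ch x; rewrite wrE.
by rewrite Hcr; case/negbT/negP; apply/forallP => x; rewrite wrE.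
Qed.

Import FiniteModule.

Let abH := der_abelian 0 H.

Definition wr_abel g : fmod_of abH :=
  (\sum_(r < p) fmod abH (coset H^`(1) (wr_comp g r)))%R.

Lemma wr_abelE s c : (forall r, c r \in H) ->
  wr_abel (wr s c) = (\sum_(r < p) fmod abH (coset H^`(1) (c r)))%R.
Proof. by move=> Hc; apply: eq_bigr => r _; rewrite wr_compE. Qed.

Lemma wr_abelM : {in wreath &, {morph wr_abel : g h / g * h >-> (g + h)%R}}.
Proof.
move=> _ _ /wreathP[s [c Hc ->]] /wreathP[t [d Hd ->]].
rewrite wrM !wr_abelE // => [|r]; last by rewrite groupM.
rewrite [X in (_ + X)%R](reindex_inj (addIr s)) -big_split /=.
apply: eq_bigr => r _; have nH'H := der_norm 1 H.
by rewrite morphM ?(subsetP nH'H) // fmodM ?mem_quotient.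
Qed.

Lemma mem_der1_wreath g : g \in wreath^`(1) ->
  exists c, [/\ forall r, c r \in H, \prod_(r < p) c r \in H^`(1) & g = wr 0%R c].
Proof.
move=> W'g.
have /setIdP[_ /eqP] := subsetP (der1_sub_additive_ker wr_abelM) g W'g.
have /setIdP[/wreathP[s [c Hc ->]] /eqP] :=
  subsetP (der1_sub_additive_ker wr_topM) g W'g.
rewrite wr_topE wr_abelE // => -> abel_c; exists c; split=> //.
have nH'H := der_norm 1 H; have Hprod : \prod_(r < p) c r \in H by rewrite group_prod.
apply: coset_idr; first exact: (subsetP nH'H).
rewrite morph_prod => [|r _]; last exact: (subsetP nH'H).
transitivity (fmval (0 : fmod_of abH)%R); last exact: fmval0.
rewrite -abel_c fmval_sum; apply: eq_bigr => r _.
by rewrite fmodK ?mem_quotient.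
Qed.

Lemma wreath_cw_bound1 : cw_bound H 1 -> cw_bound wreath 1.
Proof.
move/cw_bound1P=> cwH; apply/cw_bound1P => g /mem_der1_wreath[c [Hc]].
case/cwH=> u [v [Hu Hv /wr_base_commg-> ->]].
by do 2!eexists; split; last reflexivity; apply: mem_wreath => r;
  [rewrite groupM // group_prod | case: ifP].
Qed.

Lemma wreath_der1_neq1 : 1 < p -> H :!=: 1 -> wreath^`(1) != 1.
Proof.
move=> p_gt1 /trivgPn[h Hh nth].
pose c r := if r == 0%R then h else 1.
have Wc : wr 0%R c \in wreath by apply: mem_wreath => r; rewrite /c; case: ifP.
pose shift := wr (- inZp 1)%R (fun _ => 1).
have Wshift : shift \in wreath by apply: mem_wreath.
apply/trivgPn; exists [~ wr 0%R c, shift]; first exact: mem_commg.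
rewrite wr_commg0 -wr1; apply: contra nth => /eqP/wr_inj[_ /(_ 0%R)].
rewrite /c eqxx sub0r opprK.
have -> : (inZp 1 == 0 :> 'I_p)%R = false.
  by apply/eqP => /(congr1 val) /=; rewrite modn_small.
by rewrite conjg1 mulg1 => /eqP; rewrite invg_eq1.
Qed.

End CyclicWreath.

Section IteratedWreath.

Variable n : nat.
Local Notation p := n.+1.

Fixpoint iter_wreath_dom k : finType :=
  if k is k'.+1 then ('I_p * iter_wreath_dom k')%type else unit.

Fixpoint iter_wreath_pt k : iter_wreath_dom k :=
  if k is k'.+1 return iter_wreath_dom k then (ord0, iter_wreath_pt k') else tt.

Fixpoint iter_wreath k : {group {perm iter_wreath_dom k}} :=
  match k return {group {perm iter_wreath_dom k}} with
  | 0 => 1%G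
  | k'.+1 => wreath_group n (iter_wreath k')
  end.

Lemma card_iter_wreath_dom k : #|iter_wreath_dom k| = (p ^ k)%N.
Proof.
by elim: k => [|k IHk] /=; rewrite ?card_unit // card_prod card_ord IHk expnS.
Qed.

Lemma card_iter_wreath k : #|iter_wreath k| = (p ^ (\sum_(i < k) p ^ i))%N.
Proof.
elim: k => [|k IHk] /=; first by rewrite big_ord0 cards1.
rewrite (card_wreath _ _ (iter_wreath_pt k)) IHk big_ord_recl.
have -> : \sum_(i < k) p ^ bump 0 i = (\sum_(i < k) p ^ i * p)%N.
  by apply: eq_bigr => i _; rewrite -expnSr.
by rewrite -big_distrl /= expn0 add1n [in RHS]expnS expnM.
Qed.

Lemma iter_wreath_cw_bound1 k : cw_bound (iter_wreath k) 1.
Proof.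
elim: k => [|k IHk] /=; last exact: wreath_cw_bound1 (iter_wreath_pt k) IHk.
apply/cw_bound1P => g; rewrite (trivgP (der_sub 1 _)) => /set1P->.
by exists 1, 1; rewrite comm1g group1.
Qed.

Lemma iter_wreath_der1_neq1 k : 1 < p -> 1 < k -> (iter_wreath k)^`(1) != 1.
Proof.
case: k => [|[|k]] // p_gt1 _.
apply: (wreath_der1_neq1 (iter_wreath_pt k.+1)) => //.
by rewrite -cardG_gt1 card_iter_wreath big_ord_recl -[X in X < _](expn0 p) ltn_exp2l.
Qed.

End IteratedWreath.

Section PermTransport.

Variables (T T' : finType) (f : T -> T') (g : T' -> T).
Hypotheses (fK : cancel f g) (gK : cancel g f).

Definition perm_transport (s : {perm T}) : {perm T'} :=
  perm (inj_comp (can_inj fK) (inj_comp (@perm_inj _ s) (can_inj gK))).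

Lemma perm_transportE s x : perm_transport s x = f (s (g x)).
Proof. by rewrite permE. Qed.

Lemma perm_transportM :
  {in [set: {perm T}] &, {morph perm_transport : s t / s * t}}.
Proof.
by move=> s t _ _; apply/permP => x; rewrite !(permM, perm_transportE) fK.
Qed.

Definition perm_transport_morphism := Morphism perm_transportM.

Lemma injm_perm_transport : 'injm perm_transport_morphism.
Proof.
apply/injmP => s t _ _ /= /permP st; apply/permP => x.
by apply: (can_inj fK); have := st (f x); rewrite !perm_transportE fK.
Qed.

End PermTransport.

Lemma perm_group_isog (T T' : finType) (G : {group {perm T}}) :
  #|T| = #|T'| -> exists Q : {group {perm T'}}, G \isog Q.
Proof.
move=> eqTT'; pose f x := enum_val (cast_ord eqTT' (enum_rank x)).
pose g y := enum_val (cast_ord (esym eqTT') (enum_rank y)).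
have fK : cancel f g by move=> x; rewrite /f /g enum_valK cast_ordK enum_rankK.
have gK : cancel g f by move=> y; rewrite /f /g enum_valK cast_ordKV enum_rankK.
exists (perm_transport_morphism fK gK @* G)%G.
exact: sub_isog (subsetT _) (injm_perm_transport fK gK).
Qed.

Lemma Sylow_perm_isog_iter_wreath n k (T : finType) (P : {group {perm T}}) :
  prime n.+1 -> #|T| = (n.+1 ^ k)%N -> n.+1.-Sylow([set: {perm T}]) P ->
  P \isog iter_wreath n k.
Proof.
move=> p_pr cardT sylP.
have cardT' := etrans (card_iter_wreath_dom n k) (esym cardT).
have [Q isoQ] := perm_group_isog (iter_wreath n k) cardT'.
have sylQ : n.+1.-Sylow([set: {perm T}]) Q.
  rewrite pHallE subsetT -(card_isog isoQ) card_Sym card_iter_wreath cardT.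
  by rewrite p_part logn_fact_pexp ?eqxx.
have [x _ ->] := Sylow_trans sylQ sylP.
by rewrite (isog_transl _ (isog_symr (conj_isog Q x))) isog_sym.
Qed.

Lemma Sylow_Alt_Sylow_perm p (T : finType) (P : {group {perm T}}) :
  prime p -> p != 2 -> 1 < #|T| -> p.-Sylow('Alt_T) P -> p.-Sylow([set: {perm T}]) P.
Proof.
move=> p_pr p_neq2 T_gt1; rewrite !pHallE subsetT => /andP[_ /eqP->].
rewrite card_Sym -card_Alt // partnM // [(2`_p)%N]part_p'nat ?mul1n ?eqxx //.
by rewrite p'natE // dvdn_prime2.
Qed.

Theorem corollary4 (p k : nat) (hp : prime p) (hk : (1 < k)%N) :
  (forall P : {group 'S_(p ^ k)},
      P \in 'Syl_p([set: 'S_(p ^ k)]) -> commutator_width P 1)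
  /\ ((2 < p)%N -> forall P : {group 'S_(p ^ k)},
      P \in 'Syl_p('Alt_('I_(p ^ k))) -> commutator_width P 1).
Proof.
have cw_Sylow (P : {group 'S_(p ^ k)}) :
    p.-Sylow([set: 'S_(p ^ k)]) P -> commutator_width P 1.
  case: p hp P => // n p_pr P.
  move/(Sylow_perm_isog_iter_wreath p_pr (card_ord _))/isog_symr => isoP.
  apply: commutator_width_isog isoP _; apply: commutator_width1.
    exact: iter_wreath_cw_bound1.
  exact: iter_wreath_der1_neq1 (prime_gt1 p_pr) hk.
split=> [P | p_gt2 P]; rewrite inE => sylP; apply: cw_Sylow => //.
apply: (Sylow_Alt_Sylow_perm hp) sylP; first by rewrite gtn_eqF.
by rewrite card_ord -(expn0 p) ltn_exp2l ?prime_gt1 // ltnW.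
Qed.
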